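(* Let $\mathscr{M}_4(5)$ be the regular map on Bring's surface $\overline{\mathbb{H}/H_4(5)}$ whose vertices are labelled by Hecke--Farey coordinates modulo $5$. The map $z\mapsto z+\sqrt2$, applied to Hecke--Farey coordinates, induces a rotation of $\mathscr{M}_4(5)$ through angle $2\pi/5$ about the centre vertex $\frac{1}{0\sqrt2}$.
   Context: $H_4$ is the Hecke group generated by $T(z)=z+\sqrt2$ and $S(z)=-1/z$ on the upper half-plane $\mathbb{H}$. The universal 4-gonal map $\hat{\mathscr{M}}_4$ is the map on $\mathbb{H}$ whose vertices are the images of $\infty$ under $H_4$ (the real numbers $\frac{a}{c\sqrt2}$ and $\frac{b\sqrt2}{d}$ with $a,b,c,d\in\mathbb{Z}$, $\gcd(a,c)=\gcd(b,d)=1$, including $\infty$) and whose edges are the images of the imaginary axis under $H_4$; $\frac{a}{c\sqrt2}$ and $\frac{b\sqrt2}{d}$ are joined by an edge iff $ad-2bc=\pm1$. $H_4(5)$ is the principal congruence subgroup of level 5: transformations $z\mapsto\frac{az+b\sqrt2}{c\sqrt2 z+d}$ with $a,b,c,d\in\mathbb{Z}$, $ad-2bc=1$, $a\equiv d\equiv\pm1\pmod5$, $b\equiv c\equiv0\pmod5$. $\mathscr{M}_4(5)=\hat{\mathscr{M}}_4/H_4(5)$ is a regular map of type $\{5,4\}$ (quadrilateral faces, vertices of valency 5) with 30 vertices, 60 edges and 24 faces on the genus-4 surface $\overline{\mathbb{H}/H_4(5)}$ (Bring's surface). Its vertices are labelled by Hecke--Farey coordinates modulo 5: expressions $\frac{a}{c\sqrt2}$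 or $\frac{b\sqrt2}{d}$ with $a,b,c,d\in\mathbb{Z}_5$, where $\frac{a}{c\sqrt2}$ is identified with $\frac{-a}{-c\sqrt2}$ (and similarly for the other type); two such vertices $\frac{a}{c\sqrt2}$, $\frac{b\sqrt2}{d}$ are adjacent iff $ad-2bc\equiv\pm1\pmod5$. The vertex $\frac{1}{0\sqrt2}$ (image of $\infty$) is called the centre. *)

From HB Require Import structures.
From mathcomp Require Import all_boot all_order all_algebra.
Set Implicit Arguments. Unset Strict Implicit. Unset Printing Implicit Defensive.
Import GRing.Theory.
Local Open Scope ring_scope.

Notation Z5 := 'Z_5.

(* A raw Hecke--Farey label modulo 5:
   (false, (a, c))  stands for  a / (c sqrt2)
   (true,  (b, d))  stands for  b sqrt2 / d                                 *)
Definition label := (bool * (Z5 * Z5))%type.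

(* Canonical choice of sign: the label (x, y) is identified with (-x, -y).
   Among {1,2,3,4} = Z5^*, the "positive" half is {1,2}; a pair is
   canonical when its first nonzero entry is positive. *)
Definition posZ5 (x : Z5) : bool := (x == 1) || (x == 2).
Definition canon (p : Z5 * Z5) : bool :=
  if p.1 != 0 then posZ5 p.1 else posZ5 p.2.
Definition normp (p : Z5 * Z5) : Z5 * Z5 :=
  if canon p then p else (- p.1, - p.2).

(* Vertices of M_4(5): nonzero labels taken up to the sign identification,
   represented by their canonical representative. *)
Definition is_vertex (x : label) : bool := (x.2 != (0, 0)) && canon x.2.
Definition vertex := {x : label | is_vertex x}.

Lemma is_vertex_centre : is_vertex (false, (1, 0)).
Proof. by []. Qed.

(* the centre  1/(0 sqrt2)  (image of infinity) *)
Definition centre : vertex := exist _ (false, (1, 0)) is_vertex_centre.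

(* The vertex with Hecke--Farey coordinate given by a raw label
   (t, p) with p <> (0,0).  (For the meaningless label p = (0,0) this
   returns the centre; it is never used that way.) *)
Definition vtx (t : bool) (p : Z5 * Z5) : vertex :=
  insubd centre (t, normp p).

Definition vA (a c : Z5) : vertex := vtx false (a, c).
Definition vB (b d : Z5) : vertex := vtx true (b, d).

Definition adjAB (a c b d : Z5) : bool :=
  (a * d - 2 * b * c == 1) || (a * d - 2 * b * c == -1).
Definition adj (u v : vertex) : bool :=
  match val u, val v with
  | (false, (a, c)), (true, (b, d)) => adjAB a c b d
  | (true, (b, d)), (false, (a, c)) => adjAB a c b d
  | _, _ => false
  end.

(* The generators of H_4 acting on Hecke--Farey coordinates:
   T(z) = z + sqrt2 :  a/(c sqrt2) |-> (a+2c)/(c sqrt2),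
                       b sqrt2/d   |-> (b+d) sqrt2/d;
   S(z) = -1/z      :  a/(c sqrt2) |-> (-c) sqrt2/a,
                       b sqrt2/d   |-> (-d)/(b sqrt2).                       *)
Definition Tlab (x : label) : label :=
  match x with
  | (false, (a, c)) => (false, (a + 2 * c, c))
  | (true, (b, d)) => (true, (b + d, d))
  end.
Definition Slab (x : label) : label :=
  match x with
  | (false, (a, c)) => (true, (- c, a))
  | (true, (b, d)) => (false, (- d, b))
  end.

Definition Tv (v : vertex) : vertex := let: (t, p) := Tlab (val v) in vtx t p.
Definition Sv (v : vertex) : vertex := let: (t, p) := Slab (val v) in vtx t p.

(* In the universal map the faces are the H_4-images of the
   quadrilateral with vertices  infinity, 0, -1/sqrt2, -sqrt2
   (the orbit of infinity under z |-> -1/(z+sqrt2)).  The faces of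
   M_4(5) are their projections; H_4 is generated by T and S, and the
   quotient acts through the finite group generated by Tv, Sv. *)
Definition base_face : {set vertex} :=
  [set centre; vB 0 1; vA (-1) 1; vB (-1) 1].

Inductive is_face : {set vertex} -> Prop :=
  | face_base : is_face base_face
  | face_T F : is_face F -> is_face (Tv @: F)
  | face_S F : is_face F -> is_face (Sv @: F).

(* In Hecke--Farey coordinates T acts linearly and unipotently on each of
   the two kinds of labels, (a, c) |-> (a + 2c, c) and (b, d) |-> (b + d, d),
   and it commutes with the sign identification; hence T^5 = 1 on vertices,
   so T is a permutation whose inverse T^4 again maps faces to faces.  It
   preserves edges because the determinant ad - 2bc is T-invariant:
   (a + 2c) d - 2 (b + d) c = ad - 2bc.  Finally T fixes 1/(0 sqrt2), whose
   neighbours are the vertices with ad - 2bc = d = +-1, i.e. the b sqrt2/1,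
   and it moves b sqrt2/1 to (b + 1) sqrt2/1. *)
From mathcomp Require Import all_boot all_order all_algebra ring.
Set Implicit Arguments.
Unset Strict Implicit.
Unset Printing Implicit Defensive.

Import GRing.Theory.
Local Open Scope ring_scope.

Section IterId.

Variables (T : finType) (f : T -> T) (n : nat).
Hypothesis iter_fK : forall x, iter n.+1 f x = x.

Lemma iter_id_bij : bijective f.
Proof. by exists (iter n f) => x; rewrite -?iterS -?iterSr iter_fK. Qed.

Lemma iter_imset_id (A : {set T}) : iter n.+1 (fun B : {set T} => f @: B) A = A.
Proof.
have iter_imset k : iter k (fun B : {set T} => f @: B) A = iter k f @: A.
  by elim: k => [|k IHk]; rewrite ?imset_id //= IHk -imset_comp.
by rewrite iter_imset (eq_imset _ iter_fK) imset_id.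
Qed.

Lemma iter_id_imset_closed (P : {set T} -> Prop) :
  (forall A : {set T}, P A -> P (f @: A)) ->
  forall A : {set T}, P (f @: A) -> P A.
Proof.
move=> fP A PfA; rewrite -(iter_imset_id A) iterSr.
by elim: n => //= k IHk; apply: fP.
Qed.

End IterId.

Lemma posZ5N (x : Z5) : x != 0 -> posZ5 (- x) = ~~ posZ5 x.
Proof. by case: x => [[|[|[|[|[|?]]]]] ?]. Qed.

Lemma opp_pair (x y : Z5) : - (x, y) = (- x, - y).
Proof. by []. Qed.

Lemma pairr_neq0 (x y : Z5) : y != 0 -> (x, y) != 0.
Proof. by rewrite -pair_eqE /= => /negbTE ->; rewrite andbF. Qed.

Lemma canonN (p : Z5 * Z5) : p != 0 -> canon (- p) = ~~ canon p.
Proof.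
case: p => a c nz; rewrite /canon /= oppr_eq0.
case: (a =P 0) => [a0 | /eqP a_nz] /=; rewrite posZ5N //.
by move: nz; rewrite a0.
Qed.

Lemma normpE p : normp p = if canon p then p else - p.
Proof. by []. Qed.

Lemma normp_sign p : normp p = p \/ normp p = - p.
Proof. by rewrite normpE; case: canon; [left | right]. Qed.

Lemma normp_eq0 p : (normp p == 0) = (p == 0).
Proof. by case: (normp_sign p) => ->; rewrite ?oppr_eq0. Qed.

Lemma canon_normp p : p != 0 -> canon (normp p).
Proof. by move=> nz; rewrite normpE; case: ifPn => // ncp; rewrite canonN. Qed.

Lemma normpN p : p != 0 -> normp (- p) = normp p.
Proof. by move=> nz; rewrite !normpE canonN //; case: canon; rewrite ?opprK. Qed.

Lemma normp_canon p : canon p -> normp p = p.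
Proof. by rewrite normpE => ->. Qed.

Lemma is_vertex_normp t p : p != 0 -> is_vertex (t, normp p).
Proof. by move=> nz; rewrite /is_vertex /= normp_eq0 nz canon_normp. Qed.

Definition lnorm (x : label) : label := (x.1, normp x.2).

Lemma vertex_neq0 (v : vertex) : (val v).2 != 0.
Proof. by case/andP: (valP v). Qed.

Definition vtxl (x : label) : vertex := vtx x.1 x.2.

Lemma val_vtxl x : x.2 != 0 -> val (vtxl x) = lnorm x.
Proof.
by move=> nz; rewrite /vtxl /vtx insubdK //; apply: is_vertex_normp.
Qed.

Lemma vtxl_val v : vtxl (val v) = v.
Proof.
case: v => [[t p] vp]; have /andP[nz cp] := vp; apply: val_inj.
by rewrite val_vtxl //= /lnorm /= normp_canon.
Qed.

Lemma vtxlN x : x.2 != 0 -> vtxl (x.1, - x.2) = vtxl x.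
Proof. by move=> nz; rewrite /vtxl /vtx /= normpN. Qed.

Definition adjP (p q : Z5 * Z5) : bool := adjAB p.1 p.2 q.1 q.2.

Definition ladj (x y : label) : bool :=
  match x.1, y.1 with
  | false, true => adjP x.2 y.2
  | true, false => adjP y.2 x.2
  | _, _ => false
  end.

Lemma adjE u v : adj u v = ladj (val u) (val v).
Proof. by case: u v => [[[] [? ?]] ?] [[[] [? ?]] ?]. Qed.

Lemma pm1N (x : Z5) : ((- x == 1) || (- x == -1)) = ((x == 1) || (x == -1)).
Proof. by rewrite !eqr_oppLR opprK orbC. Qed.

Lemma adjP_oppl p q : adjP (- p) q = adjP p q.
Proof.
case: p q => [a c] [b d]; rewrite /adjP /adjAB /=.
have -> : - a * d - 2 * b * - c = - (a * d - 2 * b * c) by ring.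
exact: pm1N.
Qed.

Lemma adjP_oppr p q : adjP p (- q) = adjP p q.
Proof.
case: p q => [a c] [b d]; rewrite /adjP /adjAB /=.
have -> : a * - d - 2 * - b * c = - (a * d - 2 * b * c) by ring.
exact: pm1N.
Qed.

Lemma adjP_normp p q : adjP (normp p) (normp q) = adjP p q.
Proof.
by case: (normp_sign p) => ->; case: (normp_sign q) => ->;
  rewrite ?adjP_oppl ?adjP_oppr.
Qed.

Lemma ladj_lnorm x y : ladj (lnorm x) (lnorm y) = ladj x y.
Proof. by case: x y => [[] p] [[] q]; rewrite /ladj /= ?adjP_normp. Qed.

Lemma adj_vtxl x y : x.2 != 0 -> y.2 != 0 -> adj (vtxl x) (vtxl y) = ladj x y.
Proof. by move=> nzx nzy; rewrite adjE !val_vtxl // ladj_lnorm. Qed.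

Lemma ladj_Tlab x y : ladj (Tlab x) (Tlab y) = ladj x y.
Proof.
rewrite /ladj /adjP /adjAB; case: x y => [[] [a c]] [[] [b d]] //=.
- by have -> : (b + 2 * d) * c - 2 * (a + c) * d = b * c - 2 * a * d by ring.
- by have -> : (a + 2 * c) * d - 2 * (b + d) * c = a * d - 2 * b * c by ring.
Qed.

Lemma Tlab_eq0 x : ((Tlab x).2 == 0) = (x.2 == 0).
Proof.
case: x => [[] [a c]]; rewrite /= -!pair_eqE /=;
  by case: (c =P 0) => [->|]; rewrite ?mulr0 ?addr0 ?andbF.
Qed.

Lemma TlabN x : Tlab (x.1, - x.2) = ((Tlab x).1, - (Tlab x).2).
Proof. by case: x => [[] [a c]]; rewrite /= !opp_pair; congr (_, (_, _)); ring. Qed.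

Lemma Tlab5 x : iter 5 Tlab x = x.
Proof.
have char5 (y : Z5) : y *+ 5 = 0 by rewrite -mulr_natr pchar_Zp ?mulr0.
case: x => [[] [a c]] /=; congr (_, (_, _)).
- by rewrite -[RHS]addr0 -(char5 c); ring.
- by rewrite -[RHS]addr0 -(char5 (2 * c)); ring.
Qed.

Lemma TvE v : Tv v = vtxl (Tlab (val v)).
Proof. by rewrite /Tv; case: (Tlab _). Qed.

Lemma Tv_vtxl x : x.2 != 0 -> Tv (vtxl x) = vtxl (Tlab x).
Proof.
case: x => t p /= nz; rewrite TvE val_vtxl //.
have -> : lnorm (t, p) = (t, normp p) by [].
case: (normp_sign p) => -> //.
by rewrite (TlabN (t, p)) vtxlN // Tlab_eq0.
Qed.

Lemma iter_Tlab_eq0 k x : ((iter k Tlab x).2 == 0) = (x.2 == 0).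
Proof. by elim: k => //= k; rewrite Tlab_eq0. Qed.

Lemma iter_Tv_vtxl k x : x.2 != 0 -> iter k Tv (vtxl x) = vtxl (iter k Tlab x).
Proof. by move=> nz; elim: k => //= k ->; rewrite Tv_vtxl // iter_Tlab_eq0. Qed.

Lemma Tv5 v : iter 5 Tv v = v.
Proof. by rewrite -(vtxl_val v) iter_Tv_vtxl ?Tlab5 ?vertex_neq0. Qed.

Lemma adj_Tv u v : adj (Tv u) (Tv v) = adj u v.
Proof.
have nz (w : vertex) : (Tlab (val w)).2 != 0 by rewrite Tlab_eq0 vertex_neq0.
by rewrite !TvE (adj_vtxl (nz u) (nz v)) ladj_Tlab adjE.
Qed.

Lemma Tv_centre : Tv centre = centre.
Proof. by rewrite -[centre]vtxl_val Tv_vtxl //= mulr0 addr0. Qed.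

Lemma Tv_vB b : Tv (vB b 1) = vB (b + 1) 1.
Proof. by rewrite (Tv_vtxl (x := (true, (b, 1)))) ?pairr_neq0. Qed.

Lemma centre_nbrs : [set v | adj centre v] = [set vB b 1 | b : Z5].
Proof.
have adj_centre x : x.2 != 0 ->
    adj centre (vtxl x) = x.1 && ((x.2.2 == 1) || (x.2.2 == -1)).
  move=> nz; rewrite -[centre]vtxl_val adj_vtxl //.
  by case: x nz => [[] [b d]] _; rewrite /ladj /adjP /adjAB //= mulr0 subr0 mul1r.
apply/setP => v; rewrite inE; apply/idP/imsetP => [|[b _ ->]].
  rewrite -(vtxl_val v) (adj_centre _ (vertex_neq0 v)).
  case: v => [[[] [b d]] _] //= /orP[] /eqP -> //; first by exists b.
  exists (- b) => //; rewrite -(vtxlN (x := (true, (b, -1)))) ?pairr_neq0 ?oppr_eq0 //.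
  by rewrite /= opp_pair opprK.
by rewrite (adj_centre (true, (b, 1))) ?pairr_neq0 //= eqxx.
Qed.

Theorem lemma1 :
  [/\ bijective Tv,
      (forall u v : vertex, adj (Tv u) (Tv v) = adj u v)
    & (forall F : {set vertex}, is_face (Tv @: F) <-> is_face F)] /\
  [/\ Tv centre = centre,
      [set v | adj centre v] = [set vB b 1 | b : Z5],
      (forall b : Z5, Tv (vB b 1) = vB (b + 1) 1)
    & (forall v : vertex, iter 5 Tv v = v)].
Proof.
split; split.
- exact: iter_id_bij Tv5.
- exact: adj_Tv.
- by move=> F; split; [exact: (iter_id_imset_closed Tv5 face_T) | exact: face_T].
- exact: Tv_centre.
- exact: centre_nbrs.
- exact: Tv_vB.
- exact: Tv5.
Qed.
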